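(* Let $k$ be a field of characteristic $p>0$, $S=k[[x_1,\dots,x_n]]$, and let $I=I_{\alpha_1}\cap\cdots\cap I_{\alpha_s}$ be the minimal primary decomposition of a squarefree monomial ideal $I\subseteq S$ into face ideals. Then for every $q=p^e$, $e\ge 0$, $$(I^{[q]}:_S I)=\big(I_{\alpha_1}^{[q]}+(({\bf x}^{\alpha_1})^{q-1})\big)\cap\cdots\cap\big(I_{\alpha_s}^{[q]}+(({\bf x}^{\alpha_s})^{q-1})\big).$$
   Context: For $\alpha\in\{0,1\}^n$, the face ideal is $I_\alpha=\langle x_i:\alpha_i\ne0\rangle$ and ${\bf x}^\alpha=x_1^{\alpha_1}\cdots x_n^{\alpha_n}$. A squarefree monomial ideal is an ideal generated by monomials ${\bf x}^\alpha$ with $\alpha\in\{0,1\}^n$; its minimal primary decomposition is an irredundant intersection of face ideals. $J^{[q]}$ denotes the ideal generated by $q$-th powers of elements of $J$. *)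

From HB Require Import structures.
From mathcomp Require Import all_boot all_algebra.
Set Implicit Arguments. Unset Strict Implicit. Unset Printing Implicit Defensive.
Import GRing.Theory.
Local Open Scope ring_scope.

Section PS.
Variables (k : fieldType) (n : nat).

Definition expo := {ffun 'I_n -> nat}.

(* formal power series: arbitrary coefficient functions N^n -> k *)
Definition ps := expo -> k.

Definition bnd (m : expo) : nat := (\max_(i < n) m i).+1.

Definition lowa (N : nat) (a : {ffun 'I_n -> 'I_N}) : expo :=
  [ffun i => nat_of_ord (a i)].

Definition esub (m a : expo) : expo := [ffun i => (m i - a i)%N].

Definition ps_zero : ps := fun _ => 0.
Definition ps_add (f g : ps) : ps := fun m => f m + g m.

(* Cauchy product: (f g)_m = sum_{a <= m} f_a g_(m-a) *)
Definition ps_mul (f g : ps) : ps := fun m =>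
  \sum_(a : {ffun 'I_n -> 'I_(bnd m)} | [forall i, (a i <= m i)%N])
     f (lowa a) * g (esub m (lowa a)).

Definition ps_monom (b : expo) : ps := fun m => if m == b then 1 else 0.
Definition ps_one : ps := ps_monom [ffun=> 0%N].
Definition ps_exp (f : ps) (q : nat) : ps := iter q (ps_mul f) ps_one.

Definition ps_var (i : 'I_n) : ps := ps_monom [ffun j => nat_of_bool (j == i)].

Definition xalpha (al : {ffun 'I_n -> bool}) : ps :=
  ps_monom [ffun i => nat_of_bool (al i)].

(* ideals are represented as predicates on S *)
Definition ideal_gen (G : ps -> Prop) : ps -> Prop := fun f =>
  exists (N : nat) (c g : 'I_N -> ps),
    (forall j, G (g j)) /\ f = (fun m => \sum_(j < N) ps_mul (c j) (g j) m).

Definition ideal_sum (J K : ps -> Prop) : ps -> Prop :=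
  ideal_gen (fun f => J f \/ K f).

Definition principal (g : ps) : ps -> Prop := ideal_gen (fun f => f = g).

Definition frob (q : nat) (J : ps -> Prop) : ps -> Prop :=
  ideal_gen (fun f => exists g, J g /\ f = ps_exp g q).

Definition colon (J I : ps -> Prop) : ps -> Prop :=
  fun f => forall g, I g -> J (ps_mul f g).

Definition face_ideal (al : {ffun 'I_n -> bool}) : ps -> Prop :=
  ideal_gen (fun f => exists i, al i /\ f = ps_var i).

Definition ideal_eq (J K : ps -> Prop) : Prop := forall f, J f <-> K f.

Definition sqfree_monomial_ideal (I : ps -> Prop) : Prop :=
  exists B : {set {ffun 'I_n -> bool}},
    ideal_eq I (ideal_gen (fun f => exists2 b, b \in B & f = xalpha b)).

Definition bigcapI (s : seq {ffun 'I_n -> bool}) (F : {ffun 'I_n -> bool} -> ps -> Prop)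
  : ps -> Prop := fun f => forall al, al \in s -> F al f.

(* I = I_{a_1} cap ... cap I_{a_s} is an irredundant (minimal) primary
   decomposition into face ideals *)
Definition min_face_decomp (I : ps -> Prop) (s : seq {ffun 'I_n -> bool}) : Prop :=
  ideal_eq I (bigcapI s face_ideal) /\
  forall al, al \in s ->
    ~ ideal_eq (bigcapI [seq b <- s | b != al] face_ideal) I.

End PS.

(* Every ideal in sight is spanned by the monomials it contains, so each one is
   described by the set of exponents occurring in the support of its elements.
   For I = ∩ I_α, the exponents of I are those hitting every face α; by
   additivity of Frobenius those of I^[q] hit every face with an entry >= q, and
   those of I_α^[q] + (x^α)^(q-1) hit α with an entry >= q or are >= q-1 along
   all of α.  A monomial x^m lies in (I^[q] : I) iff for every face α the exponent
   m passes the last test: sufficiency is a direct check, and for necessity one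
   multiplies x^m by the monomial supported on (complement of α) + x_j, which lies
   in I precisely because no face of an irredundant decomposition contains another. *)
From HB Require Import structures.
From mathcomp Require Import all_boot all_algebra.
From mathcomp Require Import boolp zify.
Set Implicit Arguments. Unset Strict Implicit. Unset Printing Implicit Defensive.
Import GRing.Theory.
Local Open Scope ring_scope.

Section PowerSeriesRing.
Variables (k : fieldType) (n : nat).
Local Notation expo := (expo n).
Local Notation ps := (ps k n).

Definition le_expo (a b : expo) := [forall i, a i <= b i]%N.
Definition add_expo (a b : expo) : expo := [ffun i => (a i + b i)%N].

Lemma le_expoP (a b : expo) : reflect (forall i, a i <= b i)%N (le_expo a b).
Proof. exact: forallP. Qed.

Lemma expo_ext (a b : expo) : (forall i, a i = b i :> nat) -> a = b.
Proof. by move/ffunP. Qed.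

Lemma le_expo_trans : transitive le_expo.
Proof.
by move=> b a c /le_expoP ab /le_expoP bc; apply/le_expoP => i; apply: leq_trans (ab i) _.
Qed.

Lemma le_esub (m a : expo) : le_expo (esub m a) m.
Proof. by apply/le_expoP => i; rewrite ffunE leq_subr. Qed.

Lemma esubK (m a : expo) : le_expo a m -> esub m (esub m a) = a.
Proof. by move/le_expoP => am; apply: expo_ext => i; rewrite !ffunE; move: (am i); lia. Qed.

Lemma le_add_expor (a b : expo) : le_expo b (add_expo a b).
Proof. by apply/le_expoP => i; rewrite ffunE leq_addl. Qed.

Lemma add_expo_esub (m b : expo) : le_expo b m -> add_expo (esub m b) b = m.
Proof. by move/le_expoP => bm; apply: expo_ext => i; rewrite !ffunE; move: (bm i); lia. Qed.

Definition box (m : expo) : seq expo :=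
  [seq lowa a | a <- enum (fun a : {ffun 'I_n -> 'I_(bnd m)} => [forall i, a i <= m i]%N)].

Lemma lowa_inj N : injective (@lowa n N).
Proof. by move=> a b /ffunP ab; apply/ffunP => i; apply/val_inj; move: (ab i); rewrite !ffunE. Qed.

Lemma box_uniq m : uniq (box m).
Proof. by rewrite map_inj_uniq ?enum_uniq //; apply: lowa_inj. Qed.

Lemma mem_box m a : (a \in box m) = le_expo a m.
Proof.
apply/idP/idP => [/mapP[b] | /le_expoP am].
  by rewrite mem_enum => /forallP bm ->; apply/forallP => i; rewrite ffunE.
apply/mapP; have lt_bnd i : (a i < bnd m)%N.
  by rewrite ltnS (leq_trans (am i)) //; apply: (leq_bigmax i).
exists [ffun i => Ordinal (lt_bnd i)]; last by apply/ffunP => i; rewrite !ffunE.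
by rewrite mem_enum; apply/forallP => i; rewrite ffunE /=.
Qed.

Lemma ps_mulE (f g : ps) m : ps_mul f g m = \sum_(a <- box m) f a * g (esub m a).
Proof. by rewrite /ps_mul /box big_map big_enum /=. Qed.

Lemma perm_box_esub m : perm_eq (box m) [seq esub m a | a <- box m].
Proof.
apply: uniq_perm; rewrite ?box_uniq //.
  rewrite map_inj_in_uniq ?box_uniq // => a b; rewrite !mem_box => am bm ab.
  by rewrite -(esubK am) -(esubK bm) ab.
move=> a; apply/idP/mapP => [am | [b _ ->]]; last by rewrite mem_box le_esub.
by exists (esub m a); rewrite ?mem_box ?le_esub // esubK -?mem_box.
Qed.

Lemma perm_box_sub c m : le_expo c m -> perm_eq (box c) [seq a <- box m | le_expo a c].
Proof.
move=> cm; apply: uniq_perm; rewrite ?filter_uniq ?box_uniq // => a.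
rewrite mem_filter !mem_box; apply/idP/andP => [ac | []//].
by split=> //; apply: le_expo_trans cm.
Qed.

Lemma perm_box_shift a m : le_expo a m ->
  perm_eq [seq c <- box m | le_expo a c] [seq add_expo a b | b <- box (esub m a)].
Proof.
move=> /le_expoP am; apply: uniq_perm; rewrite ?filter_uniq ?box_uniq //.
  rewrite map_inj_uniq ?box_uniq // => b1 b2 /ffunP b12; apply: expo_ext => i.
  by move: (b12 i); rewrite !ffunE; lia.
move=> c; rewrite mem_filter mem_box; apply/andP/mapP.
  case=> /le_expoP ac /le_expoP cm; exists (esub c a).
    by rewrite mem_box; apply/le_expoP => i; rewrite !ffunE; move: (ac i) (cm i); lia.
  by apply: expo_ext => i; rewrite !ffunE; move: (ac i); lia.
case=> b; rewrite mem_box => /le_expoP bma ->; split; apply/le_expoP => i; rewrite ffunE.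
  exact: leq_addr.
by move: (bma i) (am i); rewrite ffunE; lia.
Qed.

Definition pseries := ps.
HB.instance Definition _ := gen_eqMixin pseries.
HB.instance Definition _ := gen_choiceMixin pseries.

Definition ps_opp (f : pseries) : pseries := fun m => - f m.

Lemma ps_addA : associative (@ps_add k n).
Proof. by move=> f g h; apply: funext => m; rewrite /ps_add addrA. Qed.

Lemma ps_addC : commutative (@ps_add k n).
Proof. by move=> f g; apply: funext => m; rewrite /ps_add addrC. Qed.

Lemma ps_add0 : left_id (@ps_zero k n) (@ps_add k n).
Proof. by move=> f; apply: funext => m; rewrite /ps_add add0r. Qed.

Lemma ps_addN : left_inverse (@ps_zero k n) ps_opp (@ps_add k n).
Proof. by move=> f; apply: funext => m; rewrite /ps_add addNr. Qed.

HB.instance Definition _ := GRing.isZmodule.Build pseries ps_addA ps_addC ps_add0 ps_addN.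

Lemma ps_mulC : commutative (@ps_mul k n).
Proof.
move=> f g; apply: funext => m; rewrite !ps_mulE (perm_big _ (perm_box_esub m)) big_map.
by apply: eq_big_seq => a; rewrite mem_box => am; rewrite esubK // mulrC.
Qed.

Lemma ps_mulA : associative (@ps_mul k n).
Proof.
move=> f g h; apply: funext => m; rewrite ps_mulE [RHS]ps_mulE.
under eq_big_seq => a _ do rewrite ps_mulE mulr_sumr.
under [RHS]eq_big_seq => c cm.
  rewrite mem_box in cm.
  rewrite ps_mulE mulr_suml (perm_big _ (perm_box_sub cm)) big_filter big_mkcond.
  over.
rewrite exchange_big; apply: eq_big_seq => a; rewrite mem_box => am.
rewrite -big_mkcond -[RHS]big_filter (perm_big _ (perm_box_shift am)) [RHS]big_map.
apply: eq_bigr => b _; rewrite mulrA; congr (_ * g _ * h _); apply: expo_ext => i.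
all: by rewrite !ffunE; lia.
Qed.

Lemma ps_mul1 : left_id (@ps_one k n) (@ps_mul k n).
Proof.
move=> g; apply: funext => m; rewrite ps_mulE (bigD1_seq [ffun=> 0%N]) ?box_uniq //=; last first.
  by rewrite mem_box; apply/le_expoP => i; rewrite ffunE.
rewrite /ps_one /ps_monom eqxx mul1r big1_seq => [|a /andP[/negbTE -> _]]; last by rewrite mul0r.
by rewrite addr0; congr g; apply: expo_ext => i; rewrite !ffunE subn0.
Qed.

Lemma ps_mulDl : left_distributive (@ps_mul k n) (@ps_add k n).
Proof.
move=> f g h; apply: funext => m; rewrite /ps_add !ps_mulE -big_split.
by apply: eq_bigr => a _; rewrite mulrDl.
Qed.

Lemma ps_one_neq0 : (@ps_one k n : pseries) != @ps_zero k n.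
Proof.
apply/eqP => /(congr1 (fun f : pseries => f [ffun=> 0%N])).
by rewrite /ps_one /ps_monom eqxx /ps_zero => /eqP; rewrite oner_eq0.
Qed.

HB.instance Definition _ :=
  GRing.Zmodule_isComNzRing.Build pseries ps_mulA ps_mulC ps_mul1 ps_mulDl ps_one_neq0.

End PowerSeriesRing.

Section Monomials.
Variables (k : fieldType) (n : nat).
Local Notation expo := (expo n).
Local Notation PS := (pseries k n).

Definition monom (b : expo) : PS := ps_monom k b.
Definition mul_expo (q : nat) (b : expo) : expo := [ffun i => (q * b i)%N].
Definition delta_expo (i : 'I_n) : expo := [ffun j => nat_of_bool (j == i)].
Definition bool_expo (al : {ffun 'I_n -> bool}) : expo := [ffun i => nat_of_bool (al i)].

Lemma ps_var_monom i : ps_var k i = monom (delta_expo i).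
Proof. by []. Qed.

Lemma ps_sumE (I : Type) (r : seq I) (P : pred I) (F : I -> PS) m :
  (\sum_(i <- r | P i) F i) m = \sum_(i <- r | P i) F i m.
Proof. exact: (big_morph (fun f : PS => f m)). Qed.

Lemma ps_natmulE (f : PS) p m : (f *+ p) m = f m *+ p.
Proof. by elim: p => [|p IHp]; rewrite ?mulr0n // !mulrS -IHp. Qed.

Lemma ps_expE (g : PS) q : ps_exp g q = g ^+ q.
Proof. by elim: q => // q IHq; rewrite exprS -IHq. Qed.

Lemma mul_monom_eval (c : PS) b m :
  (c * monom b) m = if le_expo b m then c (esub m b) else 0.
Proof.
rewrite /GRing.mul /= ps_mulE /monom /ps_monom; case: ifP => bm.
  rewrite (bigD1_seq (esub m b)) ?box_uniq ?mem_box ?le_esub //= esubK // eqxx mulr1.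
  rewrite big1_seq ?addr0 // => a /andP[a_neq am]; rewrite ifF ?mulr0 //.
  by apply: contraNF a_neq => /eqP <-; rewrite esubK // -mem_box.
rewrite big1_seq // => a /andP[_ am]; case: eqP => [ab | _]; last by rewrite mulr0.
by move: bm; rewrite -ab le_esub.
Qed.

Lemma monom_mul a b : monom a * monom b = monom (add_expo a b).
Proof.
apply: funext => m; rewrite mul_monom_eval /monom /ps_monom.
case: ifP => [bm | /negbT bm]; last first.
  by case: eqP => // mab; rewrite mab le_add_expor in bm.
apply/esym; case: (m =P add_expo a b) => [-> | m_neq].
  by rewrite ifT //; apply/eqP/expo_ext => i; rewrite !ffunE; lia.
case: eqP => // ma; case: m_neq; rewrite -ma add_expo_esub //.
Qed.

Lemma monom_exp b q : monom b ^+ q = monom (mul_expo q b).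
Proof.
elim: q => [|q IHq].
  by rewrite expr0; congr (ps_monom k _); apply: expo_ext => i; rewrite !ffunE.
by rewrite exprS IHq monom_mul; congr (ps_monom k _); apply: expo_ext => i; rewrite !ffunE mulSn.
Qed.

Lemma pchar_pseries p : p \in [pchar k] -> p \in [pchar PS].
Proof.
move=> pchar_p; rewrite inE (pcharf_prime pchar_p); apply/eqP/funext => m.
by rewrite ps_natmulE -mulr_natr (pcharf0 pchar_p) mulr0.
Qed.

Lemma frobenius_sum p e N (F : 'I_N -> PS) : p \in [pchar k] ->
  (\sum_(j < N) F j) ^+ (p ^ e) = \sum_(j < N) F j ^+ (p ^ e).
Proof.
move=> pchar_p; have p_prime := pcharf_prime pchar_p.
apply: (big_morph (fun x : PS => x ^+ (p ^ e))).
  by move=> x y; apply: exprDn_pchar; rewrite pnatX (pnatE _ p_prime) pchar_pseries.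
by rewrite expr0n expn_eq0 (gtn_eqF (prime_gt0 p_prime)).
Qed.

End Monomials.

Section MonomialIdeals.
Variables (k : fieldType) (n : nat).
Local Notation expo := (expo n).
Local Notation PS := (pseries k n).
Local Notation monom := (@monom k n).

Definition supp_in (P : pred expo) (f : PS) := forall m, f m != 0 -> P m.
Definition upward_closed (P : pred expo) := forall a b, le_expo a b -> P a -> P b.

Lemma sum_neq0_witness (R : nmodType) (I : eqType) (r : seq I) (F : I -> R) :
  \sum_(i <- r) F i != 0 -> exists2 i, i \in r & F i != 0.
Proof.
case: (boolP (has (fun i => F i != 0) r)) => [/hasP[i ir Fi] _ | /hasPn F0]; first by exists i.
by rewrite big1_seq ?eqxx // => i /andP[_ /F0]; rewrite negbK => /eqP.
Qed.

Lemma supp_in_mul (P Q : pred expo) (f g : PS) m : supp_in P f -> supp_in Q g ->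
  (f * g) m != 0 -> exists a b, [/\ P a, Q b & m = add_expo a b].
Proof.
move=> Pf Qg; rewrite /GRing.mul /= ps_mulE => /sum_neq0_witness[a].
rewrite mem_box => /le_expoP am; rewrite mulf_eq0 negb_or => /andP[/Pf Pa /Qg Qb].
exists a, (esub m a); split=> //.
by apply: expo_ext => i; rewrite !ffunE; move: (am i); lia.
Qed.

Lemma supp_in_mull (P : pred expo) (c g : PS) :
  upward_closed P -> supp_in P g -> supp_in P (c * g).
Proof.
move=> P_up Pg m /(supp_in_mul (P := predT) (fun _ _ => isT) Pg) [a [b [_ Pb ->]]].
by apply: P_up Pb; apply: le_add_expor.
Qed.

Lemma supp_in_monom b : supp_in (pred1 b) (monom b).
Proof. by move=> m; rewrite /monom /ps_monom /=; case: ifP; rewrite ?eqxx. Qed.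

Lemma supp_in_sum (I : Type) (r : seq I) (F : I -> PS) (P : pred expo) :
  (forall i, supp_in P (F i)) -> supp_in P (\sum_(i <- r) F i).
Proof.
move=> PF m; rewrite ps_sumE.
elim: r => [|i r IHr]; rewrite ?big_nil ?eqxx // big_cons.
by case: (eqVneq (F i m) 0) => [-> | /PF //]; rewrite add0r.
Qed.

Lemma ideal_genE (G : PS -> Prop) (f : PS) : ideal_gen G f <->
  exists N (c g : 'I_N -> PS), (forall j, G (g j)) /\ f = \sum_(j < N) c j * g j.
Proof.
by split; case=> N [c [g [Gg ->]]]; exists N, c, g; split=> //; apply: funext => m; rewrite ps_sumE.
Qed.

Lemma ideal_gen_in (G : PS -> Prop) g : G g -> ideal_gen G g.
Proof.
move=> Gg; apply/ideal_genE; exists 1%N, (fun _ => 1), (fun _ => g).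
by rewrite big_ord1 mul1r.
Qed.

Lemma ideal_gen_supp_in (G : PS -> Prop) (P : pred expo) f : upward_closed P ->
  (forall g, G g -> supp_in P g) -> ideal_gen G f -> supp_in P f.
Proof.
move=> P_up PG /ideal_genE[N [c [g [Gg ->]]]].
by apply: supp_in_sum => j; apply: supp_in_mull (PG _ (Gg j)).
Qed.

(* Coefficient [f m] is assigned to the first generator [x^b] dividing [x^m]. *)
Lemma supp_in_ideal_gen (gens : seq expo) (G : PS -> Prop) (f : PS) :
  (forall b, b \in gens -> G (monom b)) ->
  supp_in [pred m | has (fun b => le_expo b m) gens] f -> ideal_gen G f.
Proof.
move=> G_gens f_gens; pose t := in_tuple gens; pose gen j := tnth t j.
pose first_gen m := [pick j | le_expo (gen j) m].
pose c j : PS := fun m =>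
  if first_gen (add_expo m (gen j)) == Some j then f (add_expo m (gen j)) else 0.
apply/ideal_genE; exists (size gens), c, (fun j => monom (gen j)); split.
  by move=> j; apply: G_gens; apply: mem_tnth.
apply: funext => m; rewrite ps_sumE.
have cgen_eval j : (c j * monom (gen j)) m =
    if le_expo (gen j) m && (first_gen m == Some j) then f m else 0.
  by rewrite mul_monom_eval; case: ifP => //= bm; rewrite /c add_expo_esub.
under eq_bigr => j _ do rewrite cgen_eval.
rewrite /first_gen; case: pickP => [j0 j0m | no_gen].
  rewrite (bigD1 j0) //= j0m eqxx big1 ?addr0 // => j j_neq.
  by rewrite (inj_eq Some_inj) eq_sym (negbTE j_neq) andbF.
rewrite big1 => [|j _]; last by rewrite no_gen.
have [// | /f_gens /hasP[b b_gens bm]] := eqVneq (f m) 0.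
by have /tnthP[j bj] : b \in t := b_gens; move: (no_gen j); rewrite /gen -bj bm.
Qed.

End MonomialIdeals.

Section FaceIdeals.
Variables (k : fieldType) (n : nat).
Local Notation expo := (expo n).
Local Notation PS := (pseries k n).
Local Notation monom := (@monom k n).
Implicit Types (al be : {ffun 'I_n -> bool}) (m : expo).

Definition meets_face (q : nat) al m := [exists i, al i && (q <= m i)%N].

Lemma meets_face_up q al : upward_closed (meets_face q al).
Proof.
move=> a b /le_expoP ab /existsP[i /andP[al_i qa]].
by apply/existsP; exists i; rewrite al_i (leq_trans qa (ab i)).
Qed.

Lemma face_idealP al (f : PS) : face_ideal al f <-> supp_in (meets_face 1 al) f.
Proof.
split.
  apply: ideal_gen_supp_in; first exact: meets_face_up.
  move=> g [i [al_i ->]] m; rewrite ps_var_monom => /supp_in_monom/eqP ->.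
  by apply/existsP; exists i; rewrite al_i !ffunE eqxx.
move=> f_face; apply: (@supp_in_ideal_gen _ _ [seq delta_expo i | i <- enum 'I_n & al i]).
  by move=> b /mapP[i]; rewrite mem_filter => /andP[al_i _] ->; exists i.
move=> m /f_face /existsP[i /andP[al_i mi]]; apply/hasP; exists (delta_expo i).
  by apply/mapP; exists i; rewrite // mem_filter al_i mem_enum.
by apply/le_expoP => j; rewrite ffunE; case: eqP => [-> |].
Qed.

Lemma face_ideal_sub al be (f : PS) :
  (forall i, be i -> al i) -> face_ideal be f -> face_ideal al f.
Proof.
move=> be_al /face_idealP f_be; apply/face_idealP => m /f_be /existsP[i /andP[be_i mi]].
by apply/existsP; exists i; rewrite be_al.
Qed.

Lemma frobenius_face p e al (g : PS) : p \in [pchar k] ->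
  face_ideal al g -> supp_in (meets_face (p ^ e) al) (g ^+ (p ^ e)).
Proof.
move=> pchar_p /ideal_genE[N [c [x [x_vars ->]]]]; rewrite frobenius_sum //.
apply: supp_in_sum => j; rewrite exprMn; apply: supp_in_mull; first exact: meets_face_up.
have [v [al_v ->]] := x_vars j; rewrite ps_var_monom monom_exp.
by move=> m /supp_in_monom/eqP ->; apply/existsP; exists v; rewrite al_v !ffunE eqxx /= muln1.
Qed.

End FaceIdeals.

Section FrobeniusColon.
Variables (k : fieldType) (p n : nat) (s : seq {ffun 'I_n -> bool}) (I : ps k n -> Prop).
Hypothesis pchar_p : p \in [pchar k].
Hypothesis I_faces : ideal_eq I (bigcapI s (@face_ideal k n)).
Variable e : nat.
Local Notation q := (p ^ e)%N.
Local Notation expo := (expo n).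
Local Notation PS := (pseries k n).
Local Notation monom := (@monom k n).
Implicit Types (al be : {ffun 'I_n -> bool}) (m : expo) (f g : PS).

Definition meets_faces (r : nat) m := all (fun al => meets_face r al m) s.

Definition colon_face al m :=
  meets_face q al m || [forall i, al i ==> (q - 1 <= m i)%N].

Lemma idealP f : I f <-> supp_in (meets_faces 1) f.
Proof.
split=> [/I_faces f_faces m fm | f_faces].
  by apply/allP => al /f_faces /face_idealP; apply.
by apply/I_faces => al s_al; apply/face_idealP => m /f_faces /allP; apply.
Qed.

Lemma frob_idealP f : frob q I f <-> supp_in (meets_faces q) f.
Proof.
split.
  apply: ideal_gen_supp_in.
    by move=> a b ab /allP I_a; apply/allP => al /I_a; apply: meets_face_up.
  move=> _ [g [/I_faces g_faces ->]] m; rewrite ps_expE => gm.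
  by apply/allP => al /g_faces g_al; apply: frobenius_face g_al m gm.
pose gens := [seq mul_expo q (bool_expo b) | b <- enum {ffun 'I_n -> bool}
                                             & meets_faces 1 (bool_expo b)].
move=> f_faces; apply: (@supp_in_ideal_gen _ _ gens).
  move=> gen /mapP[b]; rewrite mem_filter => /andP[b_faces _] ->.
  exists (xalpha k b); split; last by rewrite ps_expE -monom_exp.
  by apply/idealP => m /supp_in_monom/eqP ->.
move=> m /f_faces m_faces; pose b := [ffun i => (q <= m i)%N].
apply/hasP; exists (mul_expo q (bool_expo b)).
  apply/mapP; exists b; rewrite // mem_filter mem_enum andbT.
  apply/allP => al /(allP m_faces) /existsP[i /andP[al_i qm]].
  by apply/existsP; exists i; rewrite al_i !ffunE qm.
by apply/le_expoP => i; rewrite !ffunE; case: (leqP q (m i)) => [qm | _]; rewrite /= ?muln1 ?muln0.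
Qed.

Lemma colon_faceP al f :
  ideal_sum (frob q (face_ideal al)) (principal (ps_exp (xalpha k al) (q - 1))) f <->
  supp_in (colon_face al) f.
Proof.
have top_monom : ps_exp (xalpha k al) (q - 1) = monom (mul_expo (q - 1) (bool_expo al)).
  by rewrite ps_expE -monom_exp.
have colon_face_up : upward_closed (colon_face al).
  move=> a b ab /orP[qa | /forallP al_a]; first by rewrite /colon_face (meets_face_up ab qa).
  apply/orP; right; apply/forallP => i; apply/implyP => /(implyP (al_a i)) qa.
  by apply: leq_trans qa _; move/le_expoP: ab.
split.
  apply: ideal_gen_supp_in => // g [frob_g | principal_g].
    move: frob_g; apply: ideal_gen_supp_in => // g' [h [h_face ->]] m.
    by rewrite ps_expE => /(frobenius_face pchar_p h_face) qm; rewrite /colon_face qm.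
  move: principal_g; apply: ideal_gen_supp_in => // g' ->.
  rewrite top_monom => m /supp_in_monom/eqP ->; apply/orP; right.
  by apply/forallP => i; apply/implyP => al_i; rewrite !ffunE al_i muln1.
pose gens := rcons [seq mul_expo q (delta_expo i) | i <- enum 'I_n & al i]
                   (mul_expo (q - 1) (bool_expo al)).
move=> f_colon; apply: (@supp_in_ideal_gen _ _ gens).
  move=> b; rewrite mem_rcons in_cons => /orP[/eqP -> | /mapP[i]].
    by right; apply: ideal_gen_in; rewrite top_monom.
  rewrite mem_filter => /andP[al_i _] ->; left; apply: ideal_gen_in.
  exists (ps_var k i); split; first by apply: ideal_gen_in; exists i.
  by rewrite ps_expE ps_var_monom monom_exp.
move=> m /f_colon /orP[/existsP[i /andP[al_i qm]] | /forallP top_m]; apply/hasP.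
  exists (mul_expo q (delta_expo i)).
    rewrite mem_rcons in_cons; apply/orP; right.
    by apply/mapP; exists i; rewrite // mem_filter al_i mem_enum.
  by apply/le_expoP => j; rewrite !ffunE; case: eqP => [-> | _]; rewrite ?muln1 ?muln0.
exists (mul_expo (q - 1) (bool_expo al)); first by rewrite mem_rcons mem_head.
apply/le_expoP => j; rewrite !ffunE; case: (boolP (al j)) => al_j; rewrite ?muln1 ?muln0 //.
exact: (implyP (top_m j)).
Qed.

Hypothesis s_irredundant : forall al, al \in s ->
  ~ ideal_eq (bigcapI [seq be <- s | be != al] (@face_ideal k n)) I.

Lemma faces_incomparable al be : al \in s -> be \in s ->
  (forall i, be i -> al i) -> be = al.
Proof.
move=> s_al s_be be_al; apply/eqP; apply: contraT => be_neq; case: (s_irredundant s_al) => f.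
split=> [f_faces | /I_faces f_faces be'].
  apply/I_faces => ga s_ga; have [-> | ga_neq] := eqVneq ga al.
    by apply: face_ideal_sub be_al _; apply: f_faces; rewrite mem_filter be_neq.
  by apply: f_faces; rewrite mem_filter ga_neq.
by rewrite mem_filter => /andP[_]; apply: f_faces.
Qed.

(* A face of [s] missing this monomial would be strictly contained in [al]. *)
Lemma coface_monom_in_ideal al j : al \in s -> al j ->
  I (monom (bool_expo [ffun i => ~~ al i || (i == j)])).
Proof.
move=> s_al al_j; apply/idealP => _ /supp_in_monom/eqP ->; apply/allP => be s_be.
have [be_al | ] := boolP [forall i, be i ==> al i && (i != j)].
  have be_eq : be = al.
    by apply: faces_incomparable => // i /(implyP (forallP be_al i)) /andP[].
  by move: (forallP be_al j); rewrite be_eq al_j eqxx.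
case/forallPn => i; rewrite negb_imply negb_and negbK => /andP[be_i w_i].
by apply/existsP; exists i; rewrite be_i !ffunE w_i.
Qed.

Lemma colon_supp_in f : colon (frob q I) I f -> supp_in (fun m => all (colon_face ^~ m) s) f.
Proof.
move=> f_colon m fm; apply/allP => al s_al; apply: contraT.
rewrite negb_or => /andP[/existsPn below_q /forallPn[j]].
rewrite negb_imply -ltnNge => /andP[al_j mj_small].
pose w := bool_expo [ffun i => ~~ al i || (i == j)].
have fw_mw : (f * monom w) (add_expo m w) = f m.
  rewrite mul_monom_eval le_add_expor; congr f.
  by apply: expo_ext => i; rewrite !ffunE; lia.
have /frob_idealP /(_ (add_expo m w)) := f_colon _ (coface_monom_in_ideal s_al al_j).
rewrite -[ps_mul _ _]/(f * monom w) fw_mw.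
move=> /(_ fm) /allP /(_ _ s_al) /existsP[i /andP[al_i]].
rewrite !ffunE al_i /=; case: eqP => [-> | _]; first by move: mj_small; lia.
by move: (below_q i); rewrite al_i addn0; lia.
Qed.

Lemma supp_in_colon f : supp_in (fun m => all (colon_face ^~ m) s) f -> colon (frob q I) I f.
Proof.
move=> f_colon g /idealP g_faces; apply/frob_idealP => m.
case/(supp_in_mul f_colon g_faces) => a [b [/allP a_col /allP b_faces ->]].
apply/allP => al s_al.
have /existsP[i /andP[al_i bi]] := b_faces _ s_al.
case/orP: (a_col _ s_al) => [/existsP[i' /andP[al_i' qa]] | /forallP a_top].
  by apply/existsP; exists i'; rewrite al_i' ffunE (leq_trans qa (leq_addr _ _)).
by apply/existsP; exists i; rewrite al_i ffunE; move: (implyP (a_top i) al_i) bi; lia.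
Qed.

End FrobeniusColon.

Unset Implicit Arguments.

Theorem proposition3p2 (k : fieldType) (p n : nat) (hch : p \in [pchar k])
  (I : ps k n -> Prop) (s : seq {ffun 'I_n -> bool}) :
  sqfree_monomial_ideal I -> min_face_decomp I s ->
  forall e : nat, let q := (p ^ e)%N in
  ideal_eq (colon (frob q I) I)
    (bigcapI s (fun al => ideal_sum (frob q (@face_ideal k n al))
                                    (principal (ps_exp (@xalpha k n al) (q - 1))))).
Proof.
move=> _ [I_faces s_irr] e q f; split.
  move=> /(colon_supp_in hch I_faces s_irr) f_colon al s_al.
  by apply/(colon_faceP hch) => m /f_colon /allP; apply.
move=> f_rhs; apply: (supp_in_colon hch I_faces) => m fm; apply/allP => al s_al.
exact: (colon_faceP hch _ _ _).1 (f_rhs al s_al) m fm.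
Qed.
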